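(* Let $K\subset\mathbb{R}^k$ be a convex body symmetric about the origin and let $E(K)$ be the maximum volume ellipsoid contained in $K$. For a vector $\bm{u}$ on the boundary of $E(K)$, let $K'=\mathrm{conv}(K,2\sqrt{k}\bm{u},-2\sqrt{k}\bm{u})$. Then $\frac{\mathrm{vol}(E(K'))}{\mathrm{vol}(E(K))}\ge\frac{13}{10}$.
   Context: $\mathrm{conv}$ denotes convex hull, $\mathrm{vol}$ the $k$-dimensional volume, and $E(\cdot)$ the maximum-volume ellipsoid contained in a convex body. *)

From HB Require Import structures.
From mathcomp Require Import all_boot all_order all_algebra.
From mathcomp Require Import all_classical all_reals all_analysis.
Set Implicit Arguments. Unset Strict Implicit. Unset Printing Implicit Defensive.
Import Order.TTheory GRing.Theory Num.Theory numFieldNormedType.Exports.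
Local Open Scope classical_set_scope.
Local Open Scope ring_scope.

Definition sqnorm (R : realType) (k : nat) (x : 'cV[R]_k) : R :=
  \sum_(i < k) x i 0 ^+ 2.

Definition convex_set (R : realType) (k : nat) (C : set 'cV[R]_k) : Prop :=
  forall x y (t : R), C x -> C y -> 0 <= t -> t <= 1 ->
    C (t *: x + (1 - t) *: y).

Definition conv_hull (R : realType) (k : nat) (S : set 'cV[R]_k) : set 'cV[R]_k :=
  [set x | forall C, convex_set C -> S `<=` C -> C x].

Definition convex_body (R : realType) (k : nat) (K : set 'cV[R]_k) : Prop :=
  convex_set K /\ compact K /\ (interior K !=set0).

Definition origin_symmetric (R : realType) (k : nat) (K : set 'cV[R]_k) : Prop :=
  forall x, K x -> K (- x).

Definition ellipsoid (R : realType) (k : nat) (c : 'cV[R]_k) (A : 'M[R]_k)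
  : set 'cV[R]_k := [set c + A *m x | x in [set x | sqnorm x <= 1]].

Definition ellipsoid_boundary (R : realType) (k : nat) (c : 'cV[R]_k)
  (A : 'M[R]_k) : set 'cV[R]_k := [set c + A *m x | x in [set x | sqnorm x = 1]].

(* Volume of the ellipsoid (c, A), up to the constant factor vol(unit ball)
   which is common to all ellipsoids in R^k:  vol = vol(B^k) * |det A|. *)
Definition ellipsoid_vol_ratio (R : realType) (k : nat) (A : 'M[R]_k) : R :=
  `|\det A|.

Definition is_max_vol_ellipsoid (R : realType) (k : nat) (K : set 'cV[R]_k)
  (c : 'cV[R]_k) (A : 'M[R]_k) : Prop :=
  A \in unitmx /\ ellipsoid c A `<=` K /\
  (forall c' A', A' \in unitmx -> ellipsoid c' A' `<=` K ->
     ellipsoid_vol_ratio A' <= ellipsoid_vol_ratio A).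

(* Since K is symmetric, its maximum-volume ellipsoid E(K) = c + A B is centred at 0:
   with d = A^-1 c, the ellipsoid A (I + d d^T / (1 + |d|^2)) B is a union of chords
   joining E(K) to -E(K), so it lies in K, and its volume exceeds that of E(K) unless d = 0.
   After the change of variables x |-> A x, E(K) is the unit ball B and u = A x with
   |x| = 1.  With r = sqrt k, the convex hull of B and of +-2 r x contains the ellipsoid
   with semi-axis 2 along x and semi-axis b = sqrt ((4 r^2 - 4) / (4 r^2 - 1)) across it:
   each point of that ellipsoid lies on a segment from one of the spikes to B.  Its volume
   is 2 b^(k-1) vol(B), and b^(2 (k-1)) = (4 n / (4 n + 3))^n >= e^(-3/4) > (13/20)^2,
   where n = k - 1. *)

From Pilot Require Import Defs.
From HB Require Import structures.
From mathcomp Require Import all_boot all_order all_algebra.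
From mathcomp Require Import all_classical all_reals all_analysis.
From mathcomp Require Import ring lra.
Set Implicit Arguments. Unset Strict Implicit. Unset Printing Implicit Defensive.
Import Order.TTheory GRing.Theory Num.Theory numFieldNormedType.Exports.
Local Open Scope classical_set_scope.
Local Open Scope ring_scope.

Definition dot (R : realType) (k : nat) (p q : 'cV[R]_k) : R :=
  \sum_(i < k) p i 0 * q i 0.

Section Euclidean.
Variables (R : realType) (k : nat).
Implicit Types (p q y : 'cV[R]_k) (a b : R).

Lemma dotC p q : dot p q = dot q p.
Proof. by apply: eq_bigr => i _; rewrite mulrC. Qed.

Lemma dotpp p : dot p p = sqnorm p.
Proof. by apply: eq_bigr => i _; rewrite expr2. Qed.

Lemma dotBZl p q y a : dot (p - a *: q) y = dot p y - a * dot q y.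
Proof.
rewrite /dot mulr_sumr -sumrB; apply: eq_bigr => i _; rewrite !mxE; ring.
Qed.

Lemma dotNr p q : dot p (- q) = - dot p q.
Proof. by rewrite /dot -sumrN; apply: eq_bigr => i _; rewrite mxE mulrN. Qed.

Lemma trmx_mul_dot p q : (p^T *m q) 0 0 = dot p q.
Proof. by rewrite mxE; apply: eq_bigr => i _; rewrite mxE. Qed.

Lemma sqnorm_ge0 p : 0 <= sqnorm p.
Proof. by apply: sumr_ge0 => i _; rewrite sqr_ge0. Qed.

Lemma sqnorm_eq0 p : sqnorm p = 0 -> p = 0.
Proof.
move=> /eqP; rewrite /sqnorm psumr_eq0 => [/allP p0|i _]; last exact: sqr_ge0.
apply/matrixP => i j; rewrite ord1 mxE.
by apply/eqP; rewrite -sqrf_eq0; apply: p0; rewrite mem_index_enum.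
Qed.

Lemma sqnormDZ a b p q :
  sqnorm (a *: p + b *: q) =
  a ^+ 2 * sqnorm p + 2 * a * b * dot p q + b ^+ 2 * sqnorm q.
Proof.
rewrite /sqnorm /dot !mulr_sumr -!big_split /=; apply: eq_bigr => i _.
rewrite !mxE; ring.
Qed.

Lemma sqnormZ a p : sqnorm (a *: p) = a ^+ 2 * sqnorm p.
Proof. by rewrite /sqnorm mulr_sumr; apply: eq_bigr => i _; rewrite mxE; ring. Qed.

Lemma sqnormN p : sqnorm (- p) = sqnorm p.
Proof. by rewrite -scaleN1r sqnormZ sqrrN expr1n mul1r. Qed.

Section UnitVector.
Variable p : 'cV[R]_k.
Hypothesis p1 : sqnorm p = 1.

Lemma dot_orth_proj y : dot (y - dot y p *: p) p = 0.
Proof. by rewrite dotBZl dotpp p1 mulr1 subrr. Qed.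

Lemma sqnorm_orth_proj y : sqnorm (y - dot y p *: p) = sqnorm y - dot y p ^+ 2.
Proof.
have -> : y - dot y p *: p = 1 *: y + (- dot y p) *: p by rewrite scale1r scaleNr.
by rewrite sqnormDZ p1; ring.
Qed.

Lemma sqr_dot_le y : dot y p ^+ 2 <= sqnorm y.
Proof. by rewrite -subr_ge0 -sqnorm_orth_proj sqnorm_ge0. Qed.

End UnitVector.
End Euclidean.

Lemma mulmx_col_scalar (R : comPzRingType) (k : nat) (p : 'cV[R]_k) (m : 'M[R]_1) :
  p *m m = m 0 0 *: p.
Proof. by apply/matrixP => i j; rewrite ord1 !mxE big_ord1 mulrC. Qed.

Lemma det1Dmx_rank1 (R : comUnitRingType) (n : nat) (p : 'cV[R]_n) (q : 'rV[R]_n) :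
  \det (1%:M + p *m q) = 1 + (q *m p) 0 0.
Proof.
have lower : block_mx 1%:M (-p) q 1%:M =
    block_mx 1%:M 0 q 1%:M *m block_mx 1%:M (-p) 0 (1%:M + q *m p).
  rewrite mulmx_block !mul1mx !mul0mx !mulmx1 ?addr0 ?add0r.
  by rewrite mulmxN [1%:M + _]addrC addKr.
have upper : block_mx 1%:M (-p) q 1%:M =
    block_mx 1%:M (-p) 0 1%:M *m block_mx (1%:M + p *m q) 0 q 1%:M.
  rewrite mulmx_block !mul1mx !mul0mx !mulmx1 ?addr0 ?add0r.
  by rewrite mulNmx addrK.
have := congr1 determinant lower; rewrite upper !det_mulmx.
by rewrite det_lblock !det_ublock det_lblock !det1 !mul1r !mulr1 det_mx11 !mxE mulr1n.
Qed.

Lemma det_scalar_rank1 (R : fieldType) (n : nat) (b c : R) (p : 'cV[R]_n.+1) :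
  \det (b%:M + c *: (p *m p^T)) = b ^+ n * (b + c * (p^T *m p) 0 0).
Proof.
have [->|b0] := eqVneq b 0; last first.
  have -> : b%:M + c *: (p *m p^T) = b *: (1%:M + (c / b *: p) *m p^T).
    by rewrite scalerDr scalemx1 -scalemxAl scalerA mulrC divfK.
  rewrite detZ det1Dmx_rank1 -scalemxAr mxE exprSr -mulrA; congr (_ * _).
  by field.
rewrite raddf0 add0r detZ; case: n p => [|n] p.
  by rewrite det_mx11 !(mxE, big_ord1) expr1 expr0 mul1r add0r (ord1 0).
have rank_le1 : (\rank (p *m p^T) <= 1)%N := leq_trans (mxrankM_maxl _ _) (rank_leq_col p).
have : p *m p^T \notin unitmx.
  by rewrite -row_free_unit /row_free; apply: contraTneq rank_le1 => ->.
by rewrite unitmxE unitfE negbK => /eqP ->; rewrite mulr0 expr0n mul0r.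
Qed.

Section ConvexSets.
Variables (R : realType) (k : nat).
Implicit Types (S C P K : set 'cV[R]_k) (A : 'M[R]_k) (c q w : 'cV[R]_k).

(* [Defs.convex_set] is qualified because mathcomp-analysis exports its own [convex_set]. *)
Lemma conv_hull_convex S : Defs.convex_set (conv_hull S).
Proof.
move=> x y t hx hy t0 t1 C Cconv SC.
exact: Cconv (hx C Cconv SC) (hy C Cconv SC) t0 t1.
Qed.

Lemma sub_conv_hull S : S `<=` conv_hull S.
Proof. by move=> x Sx C _ /(_ x Sx). Qed.

Lemma convex_preimage_mulmx C A :
  Defs.convex_set C -> Defs.convex_set [set x | C (A *m x)].
Proof.
by move=> Cconv x y t hx hy t0 t1 /=; rewrite mulmxDr -!scalemxAr; apply: Cconv.
Qed.

Lemma ellipsoid_subP K c A :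
  ellipsoid c A `<=` K <-> forall x, sqnorm x <= 1 -> K (c + A *m x).
Proof. by split=> [EK x x1 | hK _ [x x1 <-]]; [apply: EK; exists x | exact: hK]. Qed.

Lemma convex_ball_segment P q w (l : R) :
  Defs.convex_set P -> (forall x, sqnorm x <= 1 -> P x) -> P q ->
  0 <= l <= 1 -> sqnorm (w - l *: q) <= (1 - l) ^+ 2 -> P w.
Proof.
move=> Pconv Pball Pq /andP[l0]; rewrite le_eqVlt => /predU1P[->|l_lt1] hw.
  move: hw; rewrite subrr expr0n scale1r /= => hw.
  have /sqnorm_eq0/eqP : sqnorm (w - q) = 0 by apply/eqP; rewrite eq_le hw sqnorm_ge0.
  by rewrite subr_eq0 => /eqP ->.
have l1 : 1 - l != 0 by rewrite subr_eq0 eq_sym lt_eqF.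
set w' := (1 - l)^-1 *: (w - l *: q).
have w'_ball : sqnorm w' <= 1.
  by rewrite sqnormZ exprVn mulrC ler_pdivrMr ?exprn_gt0 ?subr_gt0 ?mul1r.
have -> : w = l *: q + (1 - l) *: w'.
  by rewrite /w' scalerA mulfV // scale1r addrC subrK.
exact: Pconv (Pball _ w'_ball) l0 (ltW l_lt1).
Qed.

End ConvexSets.

Section SymmetricConvexBody.
Variables (R : realType) (k : nat) (K : set 'cV[R]_k).
Hypotheses (Kconv : Defs.convex_set K) (Ksym : origin_symmetric K).

Lemma symmetric_recenter_sub (A : 'M[R]_k) (d : 'cV[R]_k) :
  (forall x, sqnorm x <= 1 -> K (A *m d + A *m x)) ->
  forall y, sqnorm y <= 1 -> K (A *m (y + (dot d y / (1 + sqnorm d)) *: d)).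
Proof.
move=> hK y y1; set t := dot d y / (1 + sqnorm d).
have d0 := sqnorm_ge0 d.
have t_bound : -1 <= t <= 1.
  have := sqnorm_ge0 (1 *: d + 1 *: y); have := sqnorm_ge0 (1 *: d + (-1) *: y).
  rewrite !sqnormDZ /t => h1 h2.
  by rewrite ler_pdivlMr ?ler_pdivrMr; [apply/andP; split; lra | lra | lra].
(* A convex combination of a point of the ellipsoid and a point of its mirror image. *)
have -> : A *m (y + t *: d) =
    ((1 + t) / 2) *: (A *m d + A *m y) + (1 - (1 + t) / 2) *: - (A *m d + A *m (- y)).
  rewrite mulmxDr -scalemxAr mulmxN; move: (A *m d) (A *m y) => a b.
  by apply/matrixP => i j; rewrite !mxE; field.
case/andP: t_bound => t_ge t_le.
apply: Kconv; [exact: hK | | lra | lra].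
by apply: Ksym; apply: hK; rewrite sqnormN.
Qed.

Lemma max_vol_ellipsoid_center (c : 'cV[R]_k) (A : 'M[R]_k) :
  is_max_vol_ellipsoid K c A -> c = 0.
Proof.
move=> [Aunit [/ellipsoid_subP EK Amax]].
set d := invmx A *m c.
have d0 := sqnorm_ge0 d.
set e := sqnorm d / (1 + sqnorm d); have e0 : 0 <= e by rewrite divr_ge0 //; lra.
set N := 1%:M + ((1 + sqnorm d)^-1 *: d) *m d^T.
have detN : \det N = 1 + e.
  by rewrite det1Dmx_rank1 -scalemxAr mxE trmx_mul_dot dotpp mulrC.
have NE : ellipsoid 0 (A *m N) `<=` K.
  apply/ellipsoid_subP => y y1.
  rewrite add0r -mulmxA mulmxDl mul1mx -mulmxA mulmx_col_scalar trmx_mul_dot.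
  rewrite scalemxAl -scalemxAl scalerA -/d.
  by apply: symmetric_recenter_sub => // x x1; rewrite mulKVmx //; apply: EK.
have ANunit : A *m N \in unitmx.
  by rewrite unitmx_mul Aunit unitmxE detN unitfE lt0r_neq0 //; lra.
have := Amax _ _ ANunit NE.
rewrite /ellipsoid_vol_ratio det_mulmx normrM detN [`|1 + e|]ger0_norm; last lra.
have detA0 : 0 < `|\det A| by rewrite normr_gt0 -unitfE -unitmxE.
rewrite ger_pMr // => detN_le1.
have /sqnorm_eq0 d_eq0 : sqnorm d = 0.
  have : e = 0 by lra.
  by rewrite /e => /eqP; rewrite mulf_eq0 invr_eq0 => /orP[] /eqP; lra.
by rewrite -(mulKVmx Aunit c) -/d d_eq0 mulmx0.
Qed.

End SymmetricConvexBody.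

(* With b = shrink_factor r, the ellipse x^2/4 + y^2/b^2 <= 1 touches the four lines
   through (+-2 r, 0) that are tangent to the unit circle. *)
Definition shrink_factor (R : realType) (r : R) : R :=
  Num.sqrt ((4 * r ^+ 2 - 4) / (4 * r ^+ 2 - 1)).

Definition stretch_mx (R : realType) (k : nat) (b : R) (p : 'cV[R]_k) : 'M[R]_k :=
  b%:M + (2 - b) *: (p *m p^T).

Section Stretch.
Variables (R : realType) (k : nat).
Implicit Types (b : R) (p y : 'cV[R]_k).

Lemma stretch_mxN b p : stretch_mx b (- p) = stretch_mx b p.
Proof. by rewrite /stretch_mx linearN /= mulNmx mulmxN opprK. Qed.

Lemma stretch_mx_mul b p y :
  stretch_mx b p *m y = b *: y + ((2 - b) * dot y p) *: p.
Proof.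
rewrite mulmxDl mul_scalar_mx -scalemxAl -mulmxA mulmx_col_scalar.
by rewrite trmx_mul_dot dotC scalerA.
Qed.

End Stretch.

Lemma det_stretch_mx (R : realType) (n : nat) (b : R) (p : 'cV[R]_n.+1) :
  sqnorm p = 1 -> \det (stretch_mx b p) = 2 * b ^+ n.
Proof.
by move=> p1; rewrite det_scalar_rank1 trmx_mul_dot dotpp p1 mulr1 addrC subrK mulrC.
Qed.

Section ShrinkFactor.
Variables (R : realType) (r : R).

Lemma shrink_factor_ge0 : 0 <= shrink_factor r.
Proof. exact: sqrtr_ge0. Qed.

Lemma sqr_shrink_factor : 1 <= r ->
  shrink_factor r ^+ 2 = (4 * r ^+ 2 - 4) / (4 * r ^+ 2 - 1).
Proof. by move=> r1; rewrite sqr_sqrtr // divr_ge0 //; nra. Qed.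

Lemma spike_weight (s : R) : 1 <= r -> 0 <= s <= 1 ->
  exists2 l, 0 <= l <= 1 &
    shrink_factor r ^+ 2 * (1 - s ^+ 2) + (2 * s - 2 * r * l) ^+ 2 <= (1 - l) ^+ 2.
Proof.
move=> r1 /andP[s0 s1]; rewrite sqr_shrink_factor //.
have D0 : 0 < 4 * r ^+ 2 - 1 by nra.
have [small|large] := lerP (4 * r * s) 1.
  exists 0; first by rewrite lexx ler01.
  rewrite mulr0 !subr0 expr1n -(ler_pM2r D0) mul1r mulrDl mulrAC divfK ?gt_eqF //.
  have rs0 : 0 <= 4 * r * s by rewrite !mulr_ge0 //; lra.
  have := ler_pM rs0 rs0 small small; nra.
(* This [l] maximises the slack, which is a concave quadratic in [l]. *)
exists ((4 * r * s - 1) / (4 * r ^+ 2 - 1)).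
  by rewrite divr_ge0 ?ler_pdivrMr /=; nra.
rewrite -subr_ge0 -(pmulr_lge0 _ (exprn_gt0 2 D0)).
have -> : ((1 - (4 * r * s - 1) / (4 * r ^+ 2 - 1)) ^+ 2 -
    ((4 * r ^+ 2 - 4) / (4 * r ^+ 2 - 1) * (1 - s ^+ 2) +
     (2 * s - 2 * r * ((4 * r * s - 1) / (4 * r ^+ 2 - 1))) ^+ 2)) *
    (4 * r ^+ 2 - 1) ^+ 2 = 4 * (4 * r ^+ 2 - 1) * (1 - r * s) ^+ 2.
  by field; rewrite gt_eqF.
by rewrite mulr_ge0 ?sqr_ge0 //; lra.
Qed.

End ShrinkFactor.

Section SpikedBall.
Variables (R : realType) (k : nat) (P : set 'cV[R]_k) (r : R).
Hypotheses (Pconv : Defs.convex_set P) (Pball : forall x, sqnorm x <= 1 -> P x).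

Lemma stretch_mx_ball_sub_halfspace (p : 'cV[R]_k) : 1 <= r -> sqnorm p = 1 ->
  P ((2 * r) *: p) ->
  forall y, sqnorm y <= 1 -> 0 <= dot y p -> P (stretch_mx (shrink_factor r) p *m y).
Proof.
move=> r1 p1 Pspike y y1 s0; set s := dot y p; set b := shrink_factor r.
have s01 : 0 <= s <= 1.
  by rewrite s0 -(expr_le1 (ltn0Sn 1) s0) (le_trans (sqr_dot_le p1 y) y1).
have [l l01 hl] := spike_weight r1 s01.
apply: (convex_ball_segment Pconv Pball Pspike l01).
have -> : stretch_mx b p *m y - l *: ((2 * r) *: p) =
    b *: (y - s *: p) + (2 * s - 2 * r * l) *: p.
  by rewrite stretch_mx_mul -/s; apply/matrixP => i j; rewrite !mxE; ring.
rewrite sqnormDZ dot_orth_proj // sqnorm_orth_proj // p1 mulr0 addr0 mulr1 -/s.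
by apply: le_trans hl; rewrite lerD2r ler_wpM2l ?sqr_ge0 // lerB.
Qed.

Lemma stretch_mx_ball_sub (p : 'cV[R]_k) : 1 <= r -> sqnorm p = 1 ->
  P ((2 * r) *: p) -> P (- ((2 * r) *: p)) ->
  forall y, sqnorm y <= 1 -> P (stretch_mx (shrink_factor r) p *m y).
Proof.
move=> r1 p1 Pspike Pspike' y y1.
have [s0|s_neg] := lerP 0 (dot y p); first exact: stretch_mx_ball_sub_halfspace.
(* Replacing [p] by [-p] leaves the matrix unchanged and flips the sign of [dot y p]. *)
rewrite -stretch_mxN; apply: stretch_mx_ball_sub_halfspace => //.
- by rewrite sqnormN.
- by rewrite scalerN.
- by rewrite dotNr oppr_ge0 ltW.
Qed.

End SpikedBall.

Lemma stretch_ellipsoid_sub_spiked_hull (R : realType) (k : nat) (K : set 'cV[R]_k)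
    (A : 'M[R]_k) (x : 'cV[R]_k) (r : R) :
  (forall z, sqnorm z <= 1 -> K (A *m z)) -> 1 <= r -> sqnorm x = 1 ->
  ellipsoid 0 (A *m stretch_mx (shrink_factor r) x) `<=`
    conv_hull (K `|` [set (2 * r) *: (A *m x); - ((2 * r) *: (A *m x))]).
Proof.
move=> AK r1 x1; set S := _ `|` _.
have hull_pre : Defs.convex_set [set y | conv_hull S (A *m y)].
  by apply: convex_preimage_mulmx; apply: conv_hull_convex.
apply/ellipsoid_subP => y y1; rewrite add0r -mulmxA.
apply: (stretch_mx_ball_sub hull_pre) => //= [z z1 | |].
- by apply: sub_conv_hull; left; apply: AK.
- by apply: sub_conv_hull; right; left; rewrite scalemxAr.
- by apply: sub_conv_hull; right; right; rewrite mulmxN scalemxAr.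
Qed.

Lemma expR_le_inv1B (R : realType) (x : R) : x < 1 -> expR x <= (1 - x)^-1.
Proof.
move=> x1; rewrite -[expR x]invrK -expRN lef_pV2 ?posrE ?expR_gt0 ?subr_gt0 //.
exact: expR_ge1Dx.
Qed.

Lemma pow1D_le_expR (R : realType) (x : R) (n : nat) :
  0 <= x -> (1 + x) ^+ n <= expR (x * n%:R).
Proof.
move=> x0; rewrite expRM_natr; apply: lerXn2r; rewrite ?nnegrE ?expR_ge0 //.
  by rewrite addr_ge0.
exact: expR_ge1Dx.
Qed.

Lemma ratio_pow_ge (R : realType) (n : nat) :
  169 / 400 <= (4 * n%:R / (4 * n%:R + 3) : R) ^+ n.
Proof.
case: n => [|n]; first by rewrite expr0; lra.
have n0 : (0 : R) < n.+1%:R by rewrite ltr0n.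
pose x : R := 3 / (4 * n.+1%:R); have x0 : 0 <= x by rewrite divr_ge0 //; lra.
have -> : 4 * n.+1%:R / (4 * n.+1%:R + 3) = (1 + x)^-1.
  by rewrite /x; field; apply/andP; split; rewrite lt0r_neq0 //; lra.
rewrite exprVn -[169 / 400 : R]invrK lef_pV2 ?posrE ?exprn_gt0 //; last lra.
apply: le_trans (pow1D_le_expR n.+1 x0) _.
have -> : x * n.+1%:R = 4%:R * (3 / 16) by rewrite /x; field; rewrite lt0r_neq0.
have e316 : expR (3 / 16 : R) <= 16 / 13.
  by rewrite (_ : 16 / 13 = (1 - 3 / 16)^-1); [apply: expR_le_inv1B | field]; lra.
rewrite expRM_natl; apply: le_trans (lerXn2r _ _ _ e316) _; rewrite ?nnegrE ?expR_ge0 //.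
lra.
Qed.

Lemma sqrt_natS_ge1 (R : realType) (n : nat) : 1 <= Num.sqrt (n.+1%:R : R).
Proof. by rewrite -[X in X <= _]sqrtr1 ler_sqrt ?ler0n ?ler1n. Qed.

Lemma shrink_factor_sqrt_pow_ge (R : realType) (n : nat) :
  13 / 20 <= shrink_factor (Num.sqrt (n.+1%:R : R)) ^+ n.
Proof.
have b2 : shrink_factor (Num.sqrt (n.+1%:R : R)) ^+ 2 = 4 * n%:R / (4 * n%:R + 3).
  by rewrite sqr_shrink_factor ?sqrt_natS_ge1 // sqr_sqrtr // -natr1; congr (_ / _); ring.
have := ratio_pow_ge R n; rewrite -b2 -exprM mulnC exprM.
have := exprn_ge0 n (shrink_factor_ge0 (Num.sqrt (n.+1%:R : R))); nra.
Qed.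

Lemma sqnorm_eq1_dim_gt0 (R : realType) (k : nat) (x : 'cV[R]_k) :
  sqnorm x = 1 -> (0 < k)%N.
Proof.
by case: k x => // x; rewrite /sqnorm big_ord0 => /esym/eqP; rewrite oner_eq0.
Qed.

Theorem lemma4 (R : realType) (k : nat) (K : set 'cV[R]_k)
  (c : 'cV[R]_k) (A : 'M[R]_k) (u : 'cV[R]_k)
  (c' : 'cV[R]_k) (A' : 'M[R]_k) :
  convex_body K -> origin_symmetric K ->
  is_max_vol_ellipsoid K c A ->
  ellipsoid_boundary c A u ->
  is_max_vol_ellipsoid
    (conv_hull (K `|` [set (2 * Num.sqrt (k%:R)) *: u;
                          - ((2 * Num.sqrt (k%:R)) *: u)])) c' A' ->
  ellipsoid_vol_ratio A' / ellipsoid_vol_ratio A >= 13 / 10.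
Proof.
move=> [Kconv _] Ksym KE [x /= x1 <-] [_ [_ A'max]].
have c0 := max_vol_ellipsoid_center Kconv Ksym KE; subst c.
case: KE => Aunit [/ellipsoid_subP EK _]; rewrite add0r in A'max.
have AK : forall z, sqnorm z <= 1 -> K (A *m z) by move=> z /EK; rewrite add0r.
have [n kE] : exists n, k = n.+1 by exists k.-1; rewrite prednK // (sqnorm_eq1_dim_gt0 x1).
subst k; set r : R := Num.sqrt n.+1%:R; set M := stretch_mx (shrink_factor r) x.
have hull_sub := stretch_ellipsoid_sub_spiked_hull AK (sqrt_natS_ge1 R n) x1.
have detM : \det M = 2 * shrink_factor r ^+ n by rewrite det_stretch_mx.
have bn : 13 / 20 <= shrink_factor r ^+ n := shrink_factor_sqrt_pow_ge R n.
have detA0 : 0 < `|\det A| by rewrite normr_gt0 -unitfE -unitmxE.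
have AMunit : A *m M \in unitmx.
  by rewrite unitmx_mul Aunit unitmxE detM unitfE mulf_neq0 // lt0r_neq0 //; lra.
have := A'max _ _ AMunit hull_sub.
rewrite /ellipsoid_vol_ratio det_mulmx normrM detM [`|2 * _|]ger0_norm; last first.
  by rewrite mulr_ge0 ?exprn_ge0 ?shrink_factor_ge0.
by rewrite ler_pdivlMr //; nra.
Qed.
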